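(* For every $b\in[0,1]$, $\displaystyle\limsup_{W\ni z\to1}X_b(z)=0$.
   Context: $\mathbb H=\{\operatorname{Im}z>0\}$, $W=\{z\in\mathbb H:0<\operatorname{Re}z<1,\ |z|>1\}$. $\operatorname e(z)=e^{2\pi iz}$, $\eta(z)=\operatorname e(z/6)\prod_{n\ge1}(1-\operatorname e(nz))^4$, $f_1(z)=\log|\operatorname{Im}(z)\eta(z)|$, $f_0(z)=\log|\operatorname{Im}(\frac{z+1}2)\eta(\frac{z+1}2)|$, $f_b=bf_1+(1-b)f_0$; with $z=x+iy$, $X_b=\partial f_b/\partial x$. *)

From Stdlib Require Import Reals ClassicalEpsilon.
Open Scope R_scope.

Definition C : Type := (R * R)%type.
Definition Cre (z : C) : R := fst z.
Definition Cim (z : C) : R := snd z.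
Definition C0 : C := (0, 0).
Definition C1 : C := (1, 0).
Definition Cadd (z w : C) : C := (Cre z + Cre w, Cim z + Cim w).
Definition Copp (z : C) : C := (- Cre z, - Cim z).
Definition Csub (z w : C) : C := Cadd z (Copp w).
Definition Cmul (z w : C) : C :=
  (Cre z * Cre w - Cim z * Cim w, Cre z * Cim w + Cim z * Cre w).
Definition Cscal (r : R) (z : C) : C := (r * Cre z, r * Cim z).
Fixpoint Cpow (z : C) (n : nat) : C :=
  match n with O => C1 | S m => Cmul z (Cpow z m) end.
Definition Cmod (z : C) : R := sqrt (Cre z ^ 2 + Cim z ^ 2).

Definition Cexp (z : C) : C := (exp (Cre z) * cos (Cim z), exp (Cre z) * sin (Cim z)).

Definition ee (z : C) : C := Cexp (Cmul (0, 2 * PI) z).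

Definition Ccv (u : nat -> C) (l : C) : Prop :=
  forall eps, eps > 0 -> exists N : nat, forall n, (n >= N)%nat -> Cmod (Csub (u n) l) < eps.
Definition Clim (u : nat -> C) : C := epsilon (inhabits C0) (fun l => Ccv u l).

Fixpoint eta_partial (z : C) (N : nat) : C :=
  match N with
  | O => C1
  | S M => Cmul (eta_partial z M) (Cpow (Csub C1 (ee (Cscal (INR (S M)) z))) 4)
  end.

Definition eta (z : C) : C := Cmul (ee (Cscal (/ 6) z)) (Clim (eta_partial z)).

Definition f1 (x y : R) : R := ln (Cmod (Cscal y (eta (x, y)))).
Definition f0 (x y : R) : R := f1 ((x + 1) / 2) (y / 2).
Definition fb (b x y : R) : R := b * f1 x y + (1 - b) * f0 x y.

Definition inW (x y : R) : Prop := 0 < y /\ 0 < x < 1 /\ sqrt (x ^ 2 + y ^ 2) > 1.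

(** Write [z = x + iy] with [y > 0] and [s = e^{-πy/2}], so that [|e(nz)| = s^{4n}].
    The factor [1 - e(nz)] has squared modulus
    [D_n(x,y) = 1 - 2 s^{4n} cos(2πnx) + s^{8n}], hence
    [f_1(x,y) = ln y - πy/3 + Σ_{n>=1} 2 ln D_n(x,y)].

    1. The terms of this series and of its x-derivative
       [G(y,x) = Σ_{n>=1} 8πn s^{4n} sin(2πnx) / D_n(x,y)] are bounded by [K s^n]
       uniformly in [x]; so both series converge normally, [∂_x f_1 = G], and
       [X_b(x,y) = b G(y,x) + (1-b)/2 G(y/2, (x+1)/2)].  The same geometric bounds make
       the partial products of [η] converge, which identifies [|η|] with the series.
    2. Upper bound: [z = 1 - u + iy ∈ W] forces [0 < u < y^2].  The n-th term of
       [G(y, 1-u)] is [<= 0] as long as [nu <= 1/2]; for the other indices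
       [n >= 1/(4y^2)] it carries a factor [e^{-π/(4y)}].  Hence [X_b <= 11000 y] there.
    3. Lower bound: [G(y,1) = 0] and [G(y,·)] is continuous, so [X_b] is close to [0]
       at points of [W] arbitrarily close to [1].
    The theorem combines 2 and 3 with uniqueness of derivatives. *)

From Pilot Require Import Defs.
From Stdlib Require Import Reals Lra Lia Psatz ClassicalEpsilon FunctionalExtensionality Ranalysis5.
From Coquelicot Require Complex.
From Coquelicot Require Import Hierarchy Series Derive AutoDerive.
Open Scope R_scope.

(** Elementary facts on the modulus of [Defs.C = R * R]; [Defs.C] is definitionally
    Coquelicot's complex type, so most are instances of Coquelicot lemmas. *)

Lemma Cmod_sq (z : Defs.C) : Cmod z ^ 2 = Cre z ^ 2 + Cim z ^ 2.
Proof. exact (Complex.Cmod2_alt z). Qed.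

Lemma Cmod_mul (z w : Defs.C) : Cmod (Cmul z w) = Cmod z * Cmod w.
Proof. exact (Complex.Cmod_mult z w). Qed.

Lemma Cmod_pow (z : Defs.C) (n : nat) : Cmod (Cpow z n) = Cmod z ^ n.
Proof. exact (Complex.Cmod_pow z n). Qed.

Lemma Cmod_one : Cmod Defs.C1 = 1.
Proof. exact Complex.Cmod_1. Qed.

Lemma Cmod_nonneg (z : Defs.C) : 0 <= Cmod z.
Proof. exact (Complex.Cmod_ge_0 z). Qed.

Lemma Cmod_triangle (z w : Defs.C) : Cmod (Cadd z w) <= Cmod z + Cmod w.
Proof. exact (Complex.Cmod_triangle z w). Qed.

Lemma Cmod_opp (z : Defs.C) : Cmod (Copp z) = Cmod z.
Proof. exact (Complex.Cmod_opp z). Qed.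

Lemma Cmod_re (z : Defs.C) : Rabs (Cre z) <= Cmod z.
Proof. exact (Complex.re_le_Cmod z). Qed.

Lemma Cmod_im (z : Defs.C) : Rabs (Cim z) <= Cmod z.
Proof. eapply Rle_trans; [apply Rmax_r | exact (Complex.Rmax_Cmod z)]. Qed.

Lemma Cmod_scal (r : R) (z : Defs.C) : Cmod (Cscal r z) = Rabs r * Cmod z.
Proof.
  replace (Cscal r z) with (Cmul (r, 0) z)
    by (unfold Cmul, Cscal, Cre, Cim; simpl; f_equal; ring).
  rewrite Cmod_mul. f_equal. exact (Complex.Cmod_R r).
Qed.

Lemma Cmod_unit (t : R) : Cmod (cos t, sin t) = 1.
Proof.
  unfold Cmod, Cre, Cim; simpl. transitivity (sqrt 1); [f_equal | apply sqrt_1].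
  pose proof (sin2_cos2 t) as Hpyth. unfold Rsqr in Hpyth. nra.
Qed.

Lemma Cmod_exp (z : Defs.C) : Cmod (Cexp z) = exp (Cre z).
Proof.
  change (Cexp z) with (Cscal (exp (Cre z)) (cos (Cim z), sin (Cim z))).
  rewrite Cmod_scal, Cmod_unit, Rabs_pos_eq by apply Rlt_le, exp_pos. ring.
Qed.

Lemma Cmod_reverse_triangle (z w : Defs.C) : Rabs (Cmod z - Cmod w) <= Cmod (Csub z w).
Proof.
  assert (Ez : z = Cadd (Csub z w) w)
    by (unfold Csub, Cadd, Copp, Cre, Cim; destruct z, w; simpl; f_equal; ring).
  assert (Ew : w = Cadd (Copp (Csub z w)) z)
    by (unfold Csub, Cadd, Copp, Cre, Cim; destruct z, w; simpl; f_equal; ring).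
  pose proof (Cmod_triangle (Csub z w) w) as Hz. rewrite <- Ez in Hz.
  pose proof (Cmod_triangle (Copp (Csub z w)) z) as Hw. rewrite <- Ew, Cmod_opp in Hw.
  apply Rabs_le; lra.
Qed.

Lemma Cmod_le_abs_sum (z : Defs.C) : Cmod z <= Rabs (Cre z) + Rabs (Cim z).
Proof.
  destruct z as [a b]. unfold Cre, Cim; simpl.
  replace (a, b) with (Cadd (Cscal a Defs.C1) (Cscal b (0, 1)))
    by (unfold Cadd, Cscal, Defs.C1, Cre, Cim; simpl; f_equal; ring).
  eapply Rle_trans; [apply Cmod_triangle|].
  rewrite !Cmod_scal, Cmod_one.
  replace (Cmod (0, 1)) with 1 by exact (eq_sym Complex.Cmod_Ci). lra.
Qed.

(** The factors of the product: with [s = qroot y = e^{-πy/2}], the number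
    [rho n y = s^{4n} = e^{-2πny}] is [|e(nz)|] for [z = x + iy], and
    [Dfac n x y] is [|1 - e(nz)|^2]. *)
Definition qroot (y : R) : R := exp (- (PI * y / 2)).
Definition rho (n : nat) (y : R) : R := qroot y ^ (4 * n).
Definition Dfac (n : nat) (x y : R) : R :=
  1 - 2 * rho n y * cos (2 * PI * INR n * x) + rho n y ^ 2.

Lemma exp_mul_INR (k : nat) (c : R) : exp (INR k * c) = exp c ^ k.
Proof.
  induction k as [|k IH].
  - simpl. rewrite Rmult_0_l. apply exp_0.
  - rewrite S_INR, Rmult_plus_distr_r, Rmult_1_l, exp_plus, IH. simpl. ring.
Qed.

Lemma ee_scal (n : nat) (x y : R) :
  ee (Cscal (INR n) (x, y)) = Cscal (rho n y) (cos (2 * PI * INR n * x), sin (2 * PI * INR n * x)).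
Proof.
  unfold ee, Cexp, Cmul, Cscal, Cre, Cim, rho, qroot; cbn [fst snd].
  rewrite <- exp_mul_INR, mult_INR.
  replace (INR 4) with 4 by (simpl; ring).
  f_equal; f_equal; try (f_equal; ring); f_equal; field.
Qed.

Lemma rho_pos (n : nat) (y : R) : 0 < rho n y.
Proof. apply pow_lt, exp_pos. Qed.

Lemma Cmod_ee (n : nat) (x y : R) : Cmod (ee (Cscal (INR n) (x, y))) = rho n y.
Proof.
  rewrite ee_scal, Cmod_scal, Cmod_unit, Rabs_pos_eq by apply Rlt_le, rho_pos. ring.
Qed.

Lemma Cmod_one_sub_ee_sq (n : nat) (x y : R) :
  Cmod (Csub Defs.C1 (ee (Cscal (INR n) (x, y)))) ^ 2 = Dfac n x y.
Proof.
  rewrite Cmod_sq, ee_scal. unfold Csub, Cadd, Copp, Cscal, Defs.C1, Cre, Cim, Dfac; simpl.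
  pose proof (sin2_cos2 (2 * PI * INR n * x)) as Hpyth. unfold Rsqr in Hpyth. nra.
Qed.

Lemma qroot_range (y : R) : 0 < y -> 0 < qroot y < 1.
Proof.
  intro hy. split; [apply exp_pos|]. unfold qroot. rewrite <- exp_0.
  apply exp_increasing. pose proof PI_RGT_0. nra.
Qed.

Lemma pow_le_one (r : R) (n : nat) : 0 <= r <= 1 -> r ^ n <= 1.
Proof. intro Hr. rewrite <- (pow1 n). apply pow_incr. lra. Qed.

Lemma pow_antitone (r : R) (a b : nat) : 0 <= r <= 1 -> (a <= b)%nat -> r ^ b <= r ^ a.
Proof.
  intros Hr Hab. replace b with (a + (b - a))%nat by lia. rewrite pow_add.
  pose proof (pow_le_one r (b - a) Hr). pose proof (pow_le r a (proj1 Hr)). nra.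
Qed.

Lemma rho_le_pow_sq (k : nat) (y : R) : 0 < y -> rho (S k) y <= qroot y ^ S k * qroot y ^ S k.
Proof.
  intro hy. pose proof (qroot_range y hy). unfold rho. rewrite <- pow_add.
  apply pow_antitone; [lra | lia].
Qed.

Lemma rho_le_pow (k : nat) (y : R) : 0 < y -> rho (S k) y <= qroot y ^ S k.
Proof.
  intro hy. pose proof (qroot_range y hy). pose proof (rho_le_pow_sq k y hy).
  pose proof (pow_le_one (qroot y) (S k) ltac:(lra)). pose proof (pow_le (qroot y) (S k) ltac:(lra)).
  nra.
Qed.

Lemma rho_le_qroot (k : nat) (y : R) : 0 < y -> rho (S k) y <= qroot y.
Proof.
  intro hy. pose proof (qroot_range y hy). eapply Rle_trans; [apply rho_le_pow; exact hy|].
  rewrite <- (pow_1 (qroot y)) at 2. apply pow_antitone; [lra | lia].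
Qed.

Lemma Dfac_bounds (n : nat) (x y : R) : (1 - rho n y) ^ 2 <= Dfac n x y <= (1 + rho n y) ^ 2.
Proof. unfold Dfac. pose proof (rho_pos n y). pose proof (COS_bound (2 * PI * INR n * x)). nra. Qed.

Lemma Dfac_pos (k : nat) (x y : R) : 0 < y -> 0 < Dfac (S k) x y.
Proof.
  intro hy. pose proof (Dfac_bounds (S k) x y). pose proof (rho_le_qroot k y hy).
  pose proof (qroot_range y hy). nra.
Qed.

Lemma ln_le_sub_one (t : R) : 0 < t -> ln t <= t - 1.
Proof. intro ht. pose proof (exp_ineq1_le (ln t)) as He. rewrite exp_ln in He; lra. Qed.

Lemma one_sub_inv_le_ln (t : R) : 0 < t -> 1 - / t <= ln t.
Proof.
  intro ht. pose proof (ln_le_sub_one (/ t) (Rinv_0_lt_compat _ ht)) as Hl.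
  rewrite ln_Rinv in Hl by exact ht. lra.
Qed.

Lemma INR_mul_pow_le (r : R) (n : nat) : 0 <= r <= 1 -> INR n * r ^ n * (1 - r) <= 1 - r ^ n.
Proof.
  intro Hr. induction n as [|n IH]; [simpl; lra|].
  rewrite S_INR. simpl. pose proof (pow_le r n (proj1 Hr)). pose proof (pow_le_one r n Hr).
  assert (r * (INR n * r ^ n * (1 - r)) <= r * (1 - r ^ n)) by (apply Rmult_le_compat_l; lra).
  assert (r * r ^ n <= 1) by nra. nra.
Qed.

(** The k-th term ([n = k+1]) of the series [ln |∏(1 - e(nz))^4| = Σ 2 ln D_n]
    and its x-derivative. *)
Definition logfac (y : R) (k : nat) (x : R) : R := 2 * ln (Dfac (S k) x y).
Definition dlogfac (y : R) (k : nat) (x : R) : R :=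
  8 * PI * INR (S k) * rho (S k) y * sin (2 * PI * INR (S k) * x) / Dfac (S k) x y.

(** Geometric majorants [K s^{k+1}] of both terms, uniformly in [x]. *)
Definition Klog (y : R) : R := 6 + 4 / (1 - qroot y) ^ 2.
Definition Kdlog (y : R) : R := 8 * PI / (1 - qroot y) ^ 3.

(** From [(1-r)^2 <= D <= (1+r)^2] and [1 - 1/D <= ln D <= D - 1], with [r = rho_{k+1}]:
    [ln D] lies between [-2r/(1-s)^2] and [3r]. *)
Lemma logfac_bound (y : R) (k : nat) (x : R) :
  0 < y -> Rabs (logfac y k x) <= Klog y * qroot y ^ S k.
Proof.
  intro hy. unfold logfac, Klog.
  pose proof (Dfac_bounds (S k) x y) as HD. pose proof (Dfac_pos k x y hy) as HD0.
  pose proof (rho_le_pow k y hy) as Hr1. pose proof (rho_le_qroot k y hy) as Hr2.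
  pose proof (rho_pos (S k) y) as Hr3. pose proof (qroot_range y hy) as Hs.
  pose proof (ln_le_sub_one _ HD0) as Hup. pose proof (one_sub_inv_le_ln _ HD0) as Hlow.
  set (r := rho (S k) y) in *. set (s := qroot y) in *. set (D := Dfac (S k) x y) in *.
  assert (Hle : ln D <= 3 * r) by nra.
  assert (Hge : - (2 * r / (1 - s) ^ 2) <= ln D).
  { eapply Rle_trans; [|exact Hlow].
    assert (/ D <= / (1 - r) ^ 2) by (apply Rinv_le_contravar; [nra | lra]).
    assert (1 - / (1 - r) ^ 2 = - ((2 * r - r ^ 2) / (1 - r) ^ 2)) by (field; lra).
    assert ((2 * r - r ^ 2) / (1 - r) ^ 2 <= 2 * r / (1 - s) ^ 2).
    { unfold Rdiv. apply Rmult_le_compat; [nra | left; apply Rinv_0_lt_compat; nra | nra |].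
      apply Rinv_le_contravar; nra. }
    lra. }
  assert (2 * r / (1 - s) ^ 2 = r * (2 / (1 - s) ^ 2)) by (field; lra).
  assert (0 <= 2 / (1 - s) ^ 2) by (apply Rle_mult_inv_pos; nra).
  apply Rabs_le; split; nra.
Qed.

(** [|8πn r sin(..)/D| <= 8πnr/(1-s)^2] and [n r <= s^n / (1-s)]. *)
Lemma dlogfac_bound (y : R) (k : nat) (x : R) :
  0 < y -> Rabs (dlogfac y k x) <= Kdlog y * qroot y ^ S k.
Proof.
  intro hy. unfold dlogfac, Kdlog. pose proof PI_RGT_0.
  pose proof (Dfac_bounds (S k) x y) as HD. pose proof (Dfac_pos k x y hy) as HD0.
  pose proof (rho_le_pow_sq k y hy) as Hr1. pose proof (rho_le_qroot k y hy) as Hr2.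
  pose proof (rho_pos (S k) y) as Hr3. pose proof (qroot_range y hy) as Hs.
  pose proof (INR_mul_pow_le (qroot y) (S k) ltac:(lra)) as Hnp.
  pose proof (pow_le (qroot y) (S k) ltac:(lra)).
  pose proof (pos_INR (S k)). pose proof (SIN_bound (2 * PI * INR (S k) * x)).
  set (r := rho (S k) y) in *. set (s := qroot y) in *. set (D := Dfac (S k) x y) in *.
  set (p := s ^ S k) in *. set (n := INR (S k)) in *. clearbody r s D p n.
  (* [n r (1-s) <= p], since [r <= p^2] and [n p (1-s) <= 1]. *)
  assert (Hnr : n * r <= p / (1 - s)).
  { apply (Rmult_le_reg_r (1 - s)); [lra|].
    replace (p / (1 - s) * (1 - s)) with p by (field; lra).
    assert (n * r * (1 - s) <= p * (n * p * (1 - s))) by (assert (0 <= n * (1 - s)) by nra; nra).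
    assert (p * (n * p * (1 - s)) <= p * 1) by (apply Rmult_le_compat_l; lra). lra. }
  assert (HDs : (1 - s) ^ 2 <= D) by nra.
  unfold Rdiv. rewrite Rabs_mult, Rabs_inv, (Rabs_pos_eq D) by lra.
  rewrite !Rabs_mult, (Rabs_pos_eq 8), (Rabs_pos_eq PI), (Rabs_pos_eq n), (Rabs_pos_eq r) by lra.
  apply Rle_trans with (8 * PI * (n * r) * / (1 - s) ^ 2).
  { apply Rmult_le_compat; [| left; apply Rinv_0_lt_compat; lra | | apply Rinv_le_contravar; nra].
    - apply Rmult_le_pos; [| apply Rabs_pos]. assert (0 <= 8 * PI * n) by nra. nra.
    - assert (Rabs (sin (2 * PI * n * x)) <= 1) by (apply Rabs_le; lra).
      replace (8 * PI * n * r * Rabs (sin (2 * PI * n * x)))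
        with (8 * PI * (n * r) * Rabs (sin (2 * PI * n * x))) by ring.
      rewrite <- (Rmult_1_r (8 * PI * (n * r))) at 2.
      apply Rmult_le_compat_l; [apply Rmult_le_pos; nra | lra]. }
  replace (8 * PI * / (1 - s) ^ 3 * p) with (8 * PI * (p / (1 - s)) * / (1 - s) ^ 2) by (field; lra).
  apply Rmult_le_compat_r; [left; apply Rinv_0_lt_compat; nra | nra].
Qed.

Lemma geometric_partial_sum_le (s : R) (N : nat) :
  0 <= s < 1 -> sum_f_R0 (fun k => s ^ S k) N <= s / (1 - s).
Proof.
  intro Hs.
  assert (E : sum_f_R0 (fun k => s ^ S k) N = s * ((1 - s ^ S N) / (1 - s))).
  { rewrite <- tech3 by lra. rewrite scal_sum. apply sum_eq. intros. simpl. ring. }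
  rewrite E. unfold Rdiv. rewrite <- Rmult_assoc. apply Rmult_le_compat_r.
  - left. apply Rinv_0_lt_compat. lra.
  - pose proof (pow_le s (S N) (proj1 Hs)). nra.
Qed.

Lemma CVN_R_of_geometric (fn : nat -> R -> R) (s M : R) :
  0 <= s < 1 -> (forall k x, Rabs (fn k x) <= M * s ^ S k) -> CVN_R fn.
Proof.
  intros Hs Hbound r. exists (fun k => M * s ^ S k).
  exists (Series (fun k => Rabs (M * s ^ S k))). split.
  - apply is_series_Reals, Series_correct.
    apply (ex_series_ext (fun k => (Rabs M * s) * s ^ k)).
    { intro k. rewrite Rabs_mult, (Rabs_pos_eq (s ^ S k)) by (apply pow_le; lra). simpl. ring. }
    apply (ex_series_scal_l (V := R_NormedModule)), ex_series_geom. rewrite Rabs_pos_eq; lra.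
  - intros k x _. apply Hbound.
Qed.

Lemma Series_of_Un_cv (u : nat -> R) (l : R) : Un_cv (fun N => sum_f_R0 u N) l -> Series u = l.
Proof. intro H. apply is_series_unique, is_series_Reals. exact H. Qed.

Lemma SFL_Series (fn : nat -> R -> R) (cv : forall x, {l : R | Un_cv (fun N => SP fn N x) l})
  (x : R) : SFL fn cv x = Series (fun k => fn k x).
Proof. unfold SFL. destruct (cv x) as [l Hl]. symmetry. apply Series_of_Un_cv. exact Hl. Qed.

Section LogSeries.

Variable y : R.
Hypothesis hy : 0 < y.

Lemma CVN_logfac : CVN_R (logfac y).
Proof.
  apply (CVN_R_of_geometric _ (qroot y) (Klog y)).
  - pose proof (qroot_range y hy). lra.
  - intros k x. apply logfac_bound, hy.
Qed.

Lemma CVN_dlogfac : CVN_R (dlogfac y).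
Proof.
  apply (CVN_R_of_geometric _ (qroot y) (Kdlog y)).
  - pose proof (qroot_range y hy). lra.
  - intros k x. apply dlogfac_bound, hy.
Qed.

Lemma logfac_deriv (k : nat) (x : R) : derivable_pt_lim (logfac y k) x (dlogfac y k x).
Proof.
  apply is_derive_Reals. unfold logfac, dlogfac, Dfac.
  pose proof (Dfac_pos k x y hy) as HD. unfold Dfac in HD.
  set (n := INR (S k)) in *. set (r := rho (S k) y) in *. clearbody n r.
  auto_derive; [nra | field; nra].
Qed.

Lemma dlogfac_continuous (k : nat) : continuity (dlogfac y k).
Proof.
  intro x. apply derivable_continuous_pt, ex_derive_Reals_0.
  unfold dlogfac, Dfac. pose proof (Dfac_pos k x y hy) as HD. unfold Dfac in HD.
  set (n := INR (S k)) in *. set (r := rho (S k) y) in *. clearbody n r.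
  auto_derive. nra.
Qed.

Definition logsum (x : R) : R := Series (fun k => logfac y k x).
Definition dlogsum (x : R) : R := Series (fun k => dlogfac y k x).

Lemma logsum_cv (x : R) : Un_cv (fun N => sum_f_R0 (fun k => logfac y k x) N) (logsum x).
Proof.
  destruct (CVN_R_CVS _ CVN_logfac x) as [l Hl]. unfold logsum.
  rewrite (Series_of_Un_cv _ l Hl). exact Hl.
Qed.

Lemma dlogsum_cv (x : R) : Un_cv (fun N => sum_f_R0 (fun k => dlogfac y k x) N) (dlogsum x).
Proof.
  destruct (CVN_R_CVS _ CVN_dlogfac x) as [l Hl]. unfold dlogsum.
  rewrite (Series_of_Un_cv _ l Hl). exact Hl.
Qed.

Lemma dlogsum_SFL : SFL (dlogfac y) (CVN_R_CVS _ CVN_dlogfac) = dlogsum.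
Proof. apply functional_extensionality. intro x. apply SFL_Series. Qed.

Lemma dlogsum_continuous : continuity dlogsum.
Proof.
  rewrite <- dlogsum_SFL. apply SFL_continuity; [apply CVN_dlogfac | apply dlogfac_continuous].
Qed.

Lemma partial_logsum_deriv (N : nat) (x : R) :
  derivable_pt_lim (SP (logfac y) N) x (SP (dlogfac y) N x).
Proof.
  unfold SP. induction N as [|N IH]; simpl.
  - apply logfac_deriv.
  - apply (derivable_pt_lim_plus (fun t => sum_f_R0 (fun k => logfac y k t) N) (logfac y (S N)));
      [exact IH | apply logfac_deriv].
Qed.

(** Term-by-term differentiation on the ball [B(0, |x|+1)], where the derivative series
    converges uniformly to a continuous function. *)
Lemma logsum_deriv (x : R) : derivable_pt_lim logsum x (dlogsum x).
Proof.
  assert (Hr : 0 < Rabs x + 1) by (pose proof (Rabs_pos x); lra).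
  apply (derivable_pt_lim_CVU (SP (logfac y)) (SP (dlogfac y)) logsum dlogsum x 0 (mkposreal _ Hr)).
  - unfold Boule; simpl. rewrite Rminus_0_r. lra.
  - intros t n _. apply partial_logsum_deriv.
  - intros t _. apply logsum_cv.
  - rewrite <- dlogsum_SFL. apply CVN_CVU, CVN_dlogfac.
  - intros t _. apply dlogsum_continuous.
Qed.

End LogSeries.

Lemma Un_cv_of_geometric_increments (a : nat -> R) (M s : R) :
  0 <= s < 1 -> (forall n, Rabs (a (S n) - a n) <= M * s ^ S n) -> exists l, Un_cv a l.
Proof.
  intros Hs Hinc.
  assert (Hser : ex_series (fun n => a (S n) - a n)).
  { apply (ex_series_le (V := R_CompleteNormedModule) _ (fun n => (M * s) * s ^ n)).
    - intro n. replace ((M * s) * s ^ n) with (M * s ^ S n) by (simpl; ring). apply Hinc.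
    - apply (ex_series_scal_l (V := R_NormedModule)), ex_series_geom. rewrite Rabs_pos_eq; lra. }
  destruct Hser as [l Hl]. apply is_series_Reals in Hl.
  assert (Htelescope : forall n, sum_f_R0 (fun k => a (S k) - a k) n = a (S n) - a 0%nat).
  { induction n as [|n IH]; simpl; [ring | rewrite IH; ring]. }
  exists (a 0%nat + l). intros eps Heps. destruct (Hl eps Heps) as [N HN].
  exists (S N). intros [|n] Hn; [lia|]. specialize (HN n ltac:(lia)).
  rewrite Htelescope in HN. unfold Rdist in *.
  replace (a (S n) - (a 0%nat + l)) with (a (S n) - a 0%nat - l) by ring. exact HN.
Qed.

Lemma Ccv_of_geometric_increments (u : nat -> Defs.C) (M s : R) :
  0 <= s < 1 -> (forall n, Cmod (Csub (u (S n)) (u n)) <= M * s ^ S n) -> exists l, Ccv u l.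
Proof.
  intros Hs Hinc.
  destruct (Un_cv_of_geometric_increments (fun n => Cre (u n)) M s Hs) as [l1 H1].
  { intro n. eapply Rle_trans; [|apply Hinc]. apply (Cmod_re (Csub (u (S n)) (u n))). }
  destruct (Un_cv_of_geometric_increments (fun n => Cim (u n)) M s Hs) as [l2 H2].
  { intro n. eapply Rle_trans; [|apply Hinc]. apply (Cmod_im (Csub (u (S n)) (u n))). }
  exists (l1, l2). intros eps Heps.
  destruct (H1 (eps / 2) ltac:(lra)) as [N1 HN1]. destruct (H2 (eps / 2) ltac:(lra)) as [N2 HN2].
  exists (max N1 N2). intros n Hn.
  specialize (HN1 n ltac:(lia)). specialize (HN2 n ltac:(lia)). unfold Rdist in *.
  eapply Rle_lt_trans; [apply Cmod_le_abs_sum|].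
  unfold Csub, Cadd, Copp, Cre, Cim in *; simpl in *. unfold Rminus in *. lra.
Qed.

Definition wfac (k : nat) (x y : R) : Defs.C := Csub Defs.C1 (ee (Cscal (INR (S k)) (x, y))).

Lemma Cmod_wfac_pow4 (k : nat) (x y : R) : 0 < y -> Cmod (Cpow (wfac k x y) 4) = exp (logfac y k x).
Proof.
  intro hy. rewrite Cmod_pow. unfold logfac, wfac.
  replace 4%nat with (2 + 2)%nat by reflexivity. rewrite pow_add, Cmod_one_sub_ee_sq.
  rewrite <- (exp_ln (Dfac (S k) x y)) at 1 2 by (apply Dfac_pos, hy).
  rewrite <- exp_plus. f_equal. ring.
Qed.

Lemma Cmod_eta_partial (x y : R) (N : nat) :
  0 < y -> Cmod (eta_partial (x, y) (S N)) = exp (sum_f_R0 (fun k => logfac y k x) N).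
Proof.
  intro hy. induction N as [|N IH].
  - change (eta_partial (x, y) 1) with (Cmul Defs.C1 (Cpow (wfac 0 x y) 4)).
    rewrite Cmod_mul, Cmod_one, Cmod_wfac_pow4 by exact hy. simpl. ring.
  - change (eta_partial (x, y) (S (S N)))
      with (Cmul (eta_partial (x, y) (S N)) (Cpow (wfac (S N) x y) 4)).
    rewrite Cmod_mul, IH, Cmod_wfac_pow4, tech5, exp_plus by exact hy. reflexivity.
Qed.

Lemma exp_le_compat (a b : R) : a <= b -> exp a <= exp b.
Proof. intros [Hlt | ->]; [left; apply exp_increasing, Hlt | lra]. Qed.

Lemma Klog_nonneg (y : R) : 0 < y -> 0 <= Klog y.
Proof.
  intro hy. unfold Klog. pose proof (qroot_range y hy).
  assert (0 <= 4 / (1 - qroot y) ^ 2) by (apply Rle_mult_inv_pos; nra). lra.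
Qed.

Definition eta_bound (y : R) : R := exp (Klog y * (qroot y / (1 - qroot y))).

Lemma eta_bound_ge_one (y : R) : 0 < y -> 1 <= eta_bound y.
Proof.
  intro hy. unfold eta_bound. pose proof (qroot_range y hy). pose proof (Klog_nonneg y hy).
  assert (0 <= qroot y / (1 - qroot y)) by (apply Rle_mult_inv_pos; lra).
  pose proof (exp_ineq1_le (Klog y * (qroot y / (1 - qroot y)))). nra.
Qed.

Lemma Cmod_eta_partial_le (x y : R) (N : nat) : 0 < y -> Cmod (eta_partial (x, y) N) <= eta_bound y.
Proof.
  intro hy. destruct N as [|N].
  - simpl. rewrite Cmod_one. apply eta_bound_ge_one, hy.
  - rewrite Cmod_eta_partial by exact hy. unfold eta_bound. apply exp_le_compat.
    pose proof (qroot_range y hy).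
    apply Rle_trans with (sum_f_R0 (fun k => qroot y ^ S k * Klog y) N).
    + apply sum_Rle. intros k _. pose proof (logfac_bound y k x hy) as Hb.
      pose proof (Rle_abs (logfac y k x)). lra.
    + rewrite <- scal_sum. apply Rmult_le_compat_l; [apply Klog_nonneg, hy|].
      apply geometric_partial_sum_le. lra.
Qed.

Lemma pow4_sub_one (w : Defs.C) : Csub (Cpow w 4) Defs.C1 =
  Cmul (Csub w Defs.C1) (Cadd Defs.C1 (Cadd w (Cadd (Cmul w w) (Cmul w (Cmul w w))))).
Proof. destruct w. unfold Csub, Cadd, Copp, Cmul, Cpow, Defs.C1, Cre, Cim; simpl. f_equal; ring. Qed.

(** [|w^4 - 1| <= 15 |w - 1|] since [|w| <= 2]; here [|w_k - 1| = rho_{k+1}]. *)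
Lemma Cmod_wfac_pow4_sub_one (k : nat) (x y : R) :
  0 < y -> Cmod (Csub (Cpow (wfac k x y) 4) Defs.C1) <= 15 * rho (S k) y.
Proof.
  intro hy. rewrite pow4_sub_one, Cmod_mul.
  assert (Hdist : Cmod (Csub (wfac k x y) Defs.C1) = rho (S k) y).
  { rewrite <- (Cmod_ee (S k) x y), <- Cmod_opp. unfold wfac.
    f_equal. destruct (ee _). unfold Csub, Cadd, Copp, Defs.C1, Cre, Cim; simpl. f_equal; ring. }
  rewrite Hdist. set (w := wfac k x y).
  assert (Hw : Cmod w <= 2).
  { pose proof (Cmod_one_sub_ee_sq (S k) x y) as Hsq. fold (wfac k x y) w in Hsq.
    pose proof (Dfac_bounds (S k) x y). pose proof (rho_le_qroot k y hy).
    pose proof (qroot_range y hy). pose proof (Cmod_nonneg w). nra. }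
  assert (Hsum : Cmod (Cadd Defs.C1 (Cadd w (Cadd (Cmul w w) (Cmul w (Cmul w w))))) <= 15).
  { pose proof (Cmod_nonneg w).
    eapply Rle_trans; [apply Cmod_triangle|]. rewrite Cmod_one.
    eapply Rle_trans; [apply Rplus_le_compat_l, Cmod_triangle|].
    eapply Rle_trans; [apply Rplus_le_compat_l, Rplus_le_compat_l, Cmod_triangle|].
    rewrite !Cmod_mul. nra. }
  pose proof (rho_pos (S k) y). rewrite Rmult_comm. apply Rmult_le_compat_r; lra.
Qed.

Lemma eta_partial_increment (x y : R) (N : nat) : 0 < y ->
  Cmod (Csub (eta_partial (x, y) (S N)) (eta_partial (x, y) N)) <= (15 * eta_bound y) * qroot y ^ S N.
Proof.
  intro hy.
  change (eta_partial (x, y) (S N)) with (Cmul (eta_partial (x, y) N) (Cpow (wfac N x y) 4)).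
  replace (Csub (Cmul (eta_partial (x, y) N) (Cpow (wfac N x y) 4)) (eta_partial (x, y) N))
    with (Cmul (eta_partial (x, y) N) (Csub (Cpow (wfac N x y) 4) Defs.C1))
    by (destruct (eta_partial _ _), (Cpow _ _); unfold Csub, Cadd, Copp, Cmul, Defs.C1, Cre, Cim;
        simpl; f_equal; ring).
  rewrite Cmod_mul.
  pose proof (Cmod_eta_partial_le x y N hy). pose proof (Cmod_wfac_pow4_sub_one N x y hy).
  pose proof (rho_le_pow N y hy). pose proof (Cmod_nonneg (eta_partial (x, y) N)).
  pose proof (Cmod_nonneg (Csub (Cpow (wfac N x y) 4) Defs.C1)). pose proof (eta_bound_ge_one y hy).
  apply Rle_trans with (eta_bound y * (15 * rho (S N) y)); [apply Rmult_le_compat; lra | nra].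
Qed.

Lemma eta_partial_cv (x y : R) : 0 < y -> exists l, Ccv (eta_partial (x, y)) l.
Proof.
  intro hy. apply (Ccv_of_geometric_increments _ (15 * eta_bound y) (qroot y)).
  - pose proof (qroot_range y hy). lra.
  - intro n. apply eta_partial_increment, hy.
Qed.

Lemma Cmod_eta_product (x y : R) : 0 < y -> Cmod (Clim (eta_partial (x, y))) = exp (logsum y x).
Proof.
  intro hy. destruct (eta_partial_cv x y hy) as [l Hl].
  pose proof (epsilon_spec (inhabits C0) (fun l => Ccv (eta_partial (x, y)) l) (ex_intro _ l Hl)) as HC.
  fold (Clim (eta_partial (x, y))) in HC.
  apply (UL_sequence (fun N => Cmod (eta_partial (x, y) (S N)))).
  - intros eps Heps. destruct (HC eps Heps) as [N HN]. exists N. intros n Hn.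
    unfold Rdist. eapply Rle_lt_trans; [apply Cmod_reverse_triangle | apply HN; lia].
  - apply (Un_cv_ext (fun N => exp (sum_f_R0 (fun k => logfac y k x) N))).
    { intro N. symmetry. apply Cmod_eta_partial, hy. }
    apply (continuity_seq exp); [apply derivable_continuous_pt, derivable_pt_exp | apply logsum_cv, hy].
Qed.

Lemma f1_formula (x y : R) : 0 < y -> f1 x y = ln y - PI * y / 3 + logsum y x.
Proof.
  intro hy. unfold f1, eta. rewrite Cmod_scal, Cmod_mul, Cmod_eta_product by exact hy.
  unfold ee. rewrite Cmod_exp, Rabs_pos_eq by lra.
  rewrite !ln_mult by (try apply exp_pos; try lra; apply Rmult_lt_0_compat; apply exp_pos).
  rewrite !ln_exp. unfold Cmul, Cscal, Cre, Cim; simpl. field.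
Qed.

(** [X_b(x,y) = ∂_x f_b]: only the series depends on [x], and [f_0] is [f_1] at [(z+1)/2]. *)
Definition Xb (b x y : R) : R := b * dlogsum y x + (1 - b) / 2 * dlogsum (y / 2) ((x + 1) / 2).

Lemma fb_deriv (b x y : R) : 0 < y -> derivable_pt_lim (fun t => fb b t y) x (Xb b x y).
Proof.
  intro hy. apply is_derive_Reals.
  apply (is_derive_ext (fun t => b * (ln y - PI * y / 3 + logsum y t)
           + (1 - b) * (ln (y / 2) - PI * (y / 2) / 3 + logsum (y / 2) ((t + 1) / 2)))).
  { intro t. unfold fb, f0. rewrite !f1_formula by lra. reflexivity. }
  pose proof (fun t => proj2 (is_derive_Reals _ _ _) (logsum_deriv y hy t)) as H1.
  pose proof (fun t => proj2 (is_derive_Reals _ _ _) (logsum_deriv (y / 2) ltac:(lra) t)) as H2.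
  auto_derive.
  - split; [eexists; apply H1 | split; [eexists; apply H2 | exact I]].
  - replace (Derive (fun t : R => logsum y t) x) with (dlogsum y x)
      by (symmetry; apply is_derive_unique, H1).
    replace (Derive (fun t : R => logsum (y / 2) t) ((x + 1) * / 2))
      with (dlogsum (y / 2) ((x + 1) / 2))
      by (symmetry; apply is_derive_unique, H2).
    unfold Xb. field.
Qed.

(** Write [x = 1 - u]; the term of index [n]
    is [-8πn rho_n sin(2πnu) / D_n], which is [<= 0] while [nu <= 1/2], and is
    exponentially small for the remaining indices [n > 1/(2u) >= 1/(4y^2)]. *)

Lemma sin_reflect (n : nat) (u : R) : sin (2 * PI * INR n * (1 - u)) = - sin (2 * PI * INR n * u).
Proof.
  rewrite <- sin_neg, <- (sin_period (- (2 * PI * INR n * u)) n). f_equal. ring.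
Qed.

Lemma dlogfac_nonpos_near_one (y : R) (k : nat) (u : R) :
  0 < y -> 0 < u -> INR (S k) * u <= 1 / 2 -> dlogfac y k (1 - u) <= 0.
Proof.
  intros hy hu Hnu. pose proof PI_RGT_0. pose proof (pos_INR (S k)).
  pose proof (rho_pos (S k) y). pose proof (Dfac_pos k (1 - u) y hy).
  unfold dlogfac. rewrite sin_reflect.
  set (n := INR (S k)) in *. set (r := rho (S k) y) in *. set (D := Dfac (S k) (1 - u) y) in *.
  assert (Hsin : 0 <= sin (2 * PI * n * u)).
  { replace (2 * PI * n * u) with (2 * PI * (n * u)) by ring.
    assert (0 <= n * u) by (apply Rmult_le_pos; lra).
    apply sin_ge_0; nra. }
  assert (Hterm : 0 <= 8 * PI * n * r * sin (2 * PI * n * u) / D).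
  { apply Rle_mult_inv_pos; [| lra].
    apply Rmult_le_pos; [| exact Hsin]. apply Rmult_le_pos; [nra | lra]. }
  replace (8 * PI * n * r * - sin (2 * PI * n * u) / D)
    with (- (8 * PI * n * r * sin (2 * PI * n * u) / D))
    by (unfold Rdiv; ring).
  lra.
Qed.

(** [e^{-t} <= 27 / t^3], from [e^{t/3} >= t/3]. *)
Lemma exp_neg_le_cube (t : R) : 0 < t -> exp (- t) <= 27 / t ^ 3.
Proof.
  intro ht. assert (E : exp t = exp (t / 3) ^ 3) by (rewrite <- exp_mul_INR; f_equal; simpl; field).
  pose proof (exp_ineq1_le (t / 3)).
  assert ((t / 3) ^ 3 <= exp t) by (rewrite E; apply pow_incr; lra).
  rewrite exp_Ropp. apply (Rmult_le_reg_r (exp t)); [apply exp_pos|].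
  rewrite Rinv_l by (apply Rgt_not_eq, exp_pos).
  assert (0 < t ^ 3) by (apply pow_lt; lra).
  apply Rle_trans with (27 / t ^ 3 * (t / 3) ^ 3); [right; field; lra|].
  apply Rmult_le_compat_l; [apply Rle_mult_inv_pos; lra | assumption].
Qed.

(** The size [e^{-π/(4y)}] of [s^{2n}] beyond the threshold [n >= 1/(4y^2)]. *)
Definition Etail (y : R) : R := exp (- (PI / (4 * y))).

Lemma Etail_le_cube (y : R) : 0 < y -> Etail y <= 1728 * y ^ 3 / PI ^ 3.
Proof.
  intro hy. pose proof PI_RGT_0. unfold Etail.
  eapply Rle_trans; [apply exp_neg_le_cube, Rdiv_lt_0_compat; lra | right; field; lra].
Qed.

(** Beyond the threshold, [rho_n = (s^n)^2 s^{2n} <= (s^n)^2 e^{-π/(4y)}]. *)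
Lemma rho_tail (y : R) (k : nat) : 0 < y -> 1 <= 4 * y ^ 2 * INR (S k) ->
  rho (S k) y <= qroot y ^ S k * qroot y ^ S k * Etail y.
Proof.
  intros hy Hn. pose proof PI_RGT_0.
  assert (Hsplit : rho (S k) y = qroot y ^ S k * qroot y ^ S k * qroot y ^ (2 * S k))
    by (unfold rho; rewrite <- !pow_add; f_equal; lia).
  rewrite Hsplit. apply Rmult_le_compat_l; [apply Rmult_le_pos; apply pow_le, Rlt_le, exp_pos|].
  unfold qroot, Etail. rewrite <- exp_mul_INR. apply exp_le_compat.
  rewrite mult_INR. replace (INR 2) with 2 by (simpl; ring).
  apply (Rmult_le_reg_r (4 * y)); [lra|].
  replace (- (PI / (4 * y)) * (4 * y)) with (- PI) by (field; lra). nra.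
Qed.

(** In particular [rho_n <= 1/2] beyond the threshold, once [y <= 1/10]. *)
Lemma Etail_le_half (y : R) : 0 < y <= 1 / 10 -> Etail y <= 1 / 2.
Proof.
  intro hy. pose proof PI_RGT_0. pose proof PI2_3_2. pose proof (Etail_le_cube y ltac:(lra)) as HE.
  assert (27 <= PI ^ 3) by nra.
  apply Rle_trans with (1728 * y ^ 3 / 27); [| nra].
  eapply Rle_trans; [exact HE|]. unfold Rdiv. apply Rmult_le_compat_l; [nra|].
  apply Rinv_le_contravar; lra.
Qed.

(** Once [rho_n <= 1/2] we have [D_n >= 1/4], so the n-th term is at most [32πn rho_n]. *)
Lemma dlogfac_le_of_rho_small (y : R) (k : nat) (x : R) :
  0 < y -> rho (S k) y <= 1 / 2 -> dlogfac y k x <= 32 * PI * INR (S k) * rho (S k) y.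
Proof.
  intros hy Hr. pose proof PI_RGT_0. pose proof (pos_INR (S k)). pose proof (rho_pos (S k) y).
  pose proof (Dfac_bounds (S k) x y) as HD. pose proof (SIN_bound (2 * PI * INR (S k) * x)).
  unfold dlogfac.
  set (n := INR (S k)) in *. set (r := rho (S k) y) in *. set (D := Dfac (S k) x y) in *.
  set (t := sin (2 * PI * n * x)) in *.
  assert (Hc : 0 <= 8 * PI * n * r) by (apply Rmult_le_pos; [nra | lra]).
  assert (HD4 : / D <= 4) by (replace 4 with (/ (1 / 4)) by field; apply Rinv_le_contravar; nra).
  assert (HD0 : 0 < / D) by (apply Rinv_0_lt_compat; nra).
  unfold Rdiv. replace (32 * PI * n * r) with (8 * PI * n * r * 4) by ring.
  destruct (Rle_or_lt 0 t) as [Ht | Ht].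
  - replace (8 * PI * n * r * t * / D) with (8 * PI * n * r * (t * / D)) by ring.
    apply Rmult_le_compat_l; [exact Hc|]. nra.
  - assert (8 * PI * n * r * t <= 0) by nra. nra.
Qed.

Lemma dlogfac_tail_bound (y : R) (k : nat) (u : R) :
  0 < y <= 1 / 10 -> 0 < u <= 2 * y ^ 2 -> 1 / 2 < INR (S k) * u ->
  dlogfac y k (1 - u) <= (32 * PI * Etail y / (1 - qroot y)) * qroot y ^ S k.
Proof.
  intros hy hu Hnu. pose proof PI_RGT_0. pose proof (qroot_range y ltac:(lra)) as Hs.
  pose proof (Etail_le_half y hy) as HEhalf. pose proof (exp_pos (- (PI / (4 * y)))) as HE0.
  fold (Etail y) in HE0.
  pose proof (rho_tail y k ltac:(lra) ltac:(nra)) as Hrho.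
  pose proof (INR_mul_pow_le (qroot y) (S k) ltac:(lra)) as Hnp.
  pose proof (pow_le (qroot y) (S k) ltac:(lra)). pose proof (pow_le_one (qroot y) (S k) ltac:(lra)).
  pose proof (pos_INR (S k)).
  assert (Hr : rho (S k) y <= 1 / 2) by nra.
  eapply Rle_trans; [apply dlogfac_le_of_rho_small; lra|].
  set (s := qroot y) in *. set (p := s ^ S k) in *. set (n := INR (S k)) in *.
  set (r := rho (S k) y) in *. set (E := Etail y) in *.
  (* [rho_n <= p^2 E] and [n p <= 1/(1-s)] with [p = s^n] *)
  assert (Hnp' : n * p <= / (1 - s))
    by (apply (Rmult_le_reg_r (1 - s)); [lra|]; rewrite Rinv_l by lra; lra).
  apply Rle_trans with (32 * PI * (n * p) * E * p).
  { replace (32 * PI * (n * p) * E * p) with ((32 * PI * n) * (p * p * E)) by ring.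
    apply Rmult_le_compat_l; [nra | lra]. }
  replace (32 * PI * E / (1 - s) * p) with (32 * PI * / (1 - s) * E * p) by (field; lra).
  apply Rmult_le_compat_r; [lra|]. apply Rmult_le_compat_r; [lra|].
  apply Rmult_le_compat_l; [lra | exact Hnp'].
Qed.

Lemma dlogfac_upper_near_one (y : R) (k : nat) (u : R) :
  0 < y <= 1 / 10 -> 0 < u <= 2 * y ^ 2 ->
  dlogfac y k (1 - u) <= (32 * PI * Etail y / (1 - qroot y)) * qroot y ^ S k.
Proof.
  intros hy hu. destruct (Rle_or_lt (INR (S k) * u) (1 / 2)) as [Hsmall | Hlarge].
  - eapply Rle_trans; [apply dlogfac_nonpos_near_one; lra|].
    pose proof PI_RGT_0. pose proof (qroot_range y ltac:(lra)). pose proof (exp_pos (- (PI / (4 * y)))).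
    pose proof (pow_le (qroot y) (S k) ltac:(lra)).
    apply Rmult_le_pos; [apply Rle_mult_inv_pos; [unfold Etail; nra | lra] | lra].
  - apply dlogfac_tail_bound; assumption.
Qed.

Lemma Un_cv_le_bound (u : nat -> R) (l B : R) : Un_cv u l -> (forall n, u n <= B) -> l <= B.
Proof.
  intros Hu Hb. apply (Rle_cv_lim Hb Hu).
  intros eps Heps. exists 0%nat. intros n _. unfold Rdist. rewrite Rminus_diag, Rabs_R0. exact Heps.
Qed.

Lemma dlogsum_upper_near_one (y u : R) : 0 < y <= 1 / 10 -> 0 < u <= 2 * y ^ 2 ->
  dlogsum y (1 - u) <= 32 * PI * Etail y / (1 - qroot y) ^ 2.
Proof.
  intros hy hu. pose proof PI_RGT_0. pose proof (qroot_range y ltac:(lra)) as Hs.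
  pose proof (exp_pos (- (PI / (4 * y)))) as HE. fold (Etail y) in HE.
  set (c := 32 * PI * Etail y / (1 - qroot y)).
  assert (Hc : 0 <= c) by (apply Rle_mult_inv_pos; nra).
  apply Rle_trans with (c * (qroot y / (1 - qroot y))).
  - apply (Un_cv_le_bound _ _ _ (dlogsum_cv y ltac:(lra) (1 - u))). intro N.
    apply Rle_trans with (sum_f_R0 (fun k => qroot y ^ S k * c) N).
    + apply sum_Rle. intros k _. rewrite Rmult_comm. apply dlogfac_upper_near_one; assumption.
    + rewrite <- scal_sum. apply Rmult_le_compat_l; [exact Hc | apply geometric_partial_sum_le; lra].
  - unfold c. apply Rle_trans with (32 * PI * Etail y / (1 - qroot y) * (1 / (1 - qroot y))).
    + apply Rmult_le_compat_l; [exact Hc|].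
      unfold Rdiv. apply Rmult_le_compat_r; [left; apply Rinv_0_lt_compat|]; lra.
    + right. field. lra.
Qed.

(** The bound is [O(y)]: [e^{-π/(4y)} = O(y^3)] while [1 - s >= πy/4]. *)
Lemma tail_constant_le_linear (y : R) : 0 < y <= 1 / 10 ->
  32 * PI * Etail y / (1 - qroot y) ^ 2 <= 11000 * y.
Proof.
  intro hy. pose proof PI_RGT_0. pose proof PI2_3_2. pose proof PI_4.
  pose proof (qroot_range y ltac:(lra)) as Hs. pose proof (Etail_le_cube y ltac:(lra)) as HE.
  pose proof (exp_pos (- (PI / (4 * y)))) as HE0. fold (Etail y) in HE0.
  set (a := PI * y / 2).
  assert (Ha : 0 < a < 1) by (unfold a; nra).
  assert (Hsa : qroot y * (1 + a) <= 1).
  { unfold qroot. fold a.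
    replace 1 with (exp (- a) * exp a) at 2 by (rewrite <- exp_plus, Rplus_opp_l; apply exp_0).
    apply Rmult_le_compat_l; [left; apply exp_pos | pose proof (exp_ineq1_le a); lra]. }
  assert (Ea : a = PI * y / 2) by reflexivity. clearbody a.
  assert (Hgap : PI ^ 2 * y ^ 2 / 16 <= (1 - qroot y) ^ 2).
  { replace (PI ^ 2 * y ^ 2 / 16) with ((a / 2) ^ 2) by (rewrite Ea; field). apply pow_incr. nra. }
  assert (0 < PI ^ 2 * y ^ 2 / 16) by (apply Rdiv_lt_0_compat; nra).
  apply Rle_trans with (32 * PI * (1728 * y ^ 3 / PI ^ 3) / (PI ^ 2 * y ^ 2 / 16)).
  { unfold Rdiv.
    apply Rmult_le_compat; [nra | left; apply Rinv_0_lt_compat; nra | | apply Rinv_le_contravar; nra].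
    apply Rmult_le_compat_l; nra. }
  replace (32 * PI * (1728 * y ^ 3 / PI ^ 3) / (PI ^ 2 * y ^ 2 / 16)) with (884736 * y / PI ^ 4)
    by (field; lra).
  assert (81 <= PI ^ 4) by (assert (9 <= PI ^ 2) by nra; nra).
  apply (Rmult_le_reg_r (PI ^ 4)); [nra|]. unfold Rdiv. rewrite Rmult_assoc, Rinv_l by nra. nra.
Qed.

Lemma dlogsum_le_linear (y u : R) : 0 < y <= 1 / 10 -> 0 < u <= 2 * y ^ 2 ->
  dlogsum y (1 - u) <= 11000 * y.
Proof.
  intros hy hu. eapply Rle_trans;
    [apply dlogsum_upper_near_one | apply tail_constant_le_linear]; assumption.
Qed.

Lemma inW_near_one (x y : R) : inW x y -> 0 < 1 - x < y ^ 2.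
Proof.
  intros [hy [[hx0 hx1] Hmod]].
  assert (1 < x ^ 2 + y ^ 2).
  { destruct (Rle_or_lt (x ^ 2 + y ^ 2) 1) as [Hle | Hlt]; [| exact Hlt].
    assert (sqrt (x ^ 2 + y ^ 2) <= 1) by (rewrite <- sqrt_1; apply sqrt_le_1_alt, Hle). lra. }
  split; nra.
Qed.

Lemma inW_of_small (u y : R) : 0 < y <= 1 / 2 -> 0 < u <= y ^ 2 / 4 -> inW (1 - u) y.
Proof.
  intros hy hu. assert (y ^ 2 <= 1 / 4) by nra.
  split; [lra | split; [lra |]].
  pose proof (sqrt_lt_1_alt 1 ((1 - u) ^ 2 + y ^ 2) ltac:(nra)) as Hs.
  rewrite sqrt_1 in Hs. exact Hs.
Qed.

Lemma y_le_dist_one (x y : R) : 0 < y -> y <= sqrt ((x - 1) ^ 2 + y ^ 2).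
Proof.
  intro hy. apply Rle_trans with (sqrt (y ^ 2)); [rewrite sqrt_pow2; lra|].
  apply sqrt_le_1_alt. pose proof (pow2_ge_0 (x - 1)). lra.
Qed.

Lemma Xb_le_linear (b x y : R) : 0 <= b <= 1 -> inW x y -> y <= 1 / 10 -> Xb b x y <= 11000 * y.
Proof.
  intros hb HW hy10. pose proof (inW_near_one x y HW) as Hu. destruct HW as [hy _].
  set (u := 1 - x) in Hu.
  replace x with (1 - u) by (unfold u; ring). unfold Xb.
  replace ((1 - u + 1) / 2) with (1 - u / 2) by field.
  assert (G1 : dlogsum y (1 - u) <= 11000 * y) by (apply dlogsum_le_linear; nra).
  assert (G2 : dlogsum (y / 2) (1 - u / 2) <= 11000 * (y / 2)) by (apply dlogsum_le_linear; nra).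
  assert (b * dlogsum y (1 - u) <= b * (11000 * y)) by (apply Rmult_le_compat_l; lra).
  assert ((1 - b) / 2 * dlogsum (y / 2) (1 - u / 2) <= (1 - b) / 2 * (11000 * (y / 2)))
    by (apply Rmult_le_compat_l; lra).
  nra.
Qed.

Lemma Xb_small_near_one (b : R) : 0 <= b <= 1 -> forall eps, eps > 0 -> exists delta, delta > 0 /\
  forall x y, inW x y -> sqrt ((x - 1) ^ 2 + y ^ 2) < delta -> Xb b x y < eps.
Proof.
  intros hb eps heps. exists (Rmin (1 / 10) (eps / 11001)). split; [apply Rmin_pos; lra|].
  intros x y HW Hdist.
  pose proof (Rmin_l (1 / 10) (eps / 11001)). pose proof (Rmin_r (1 / 10) (eps / 11001)).
  pose proof (y_le_dist_one x y (proj1 HW)). pose proof (proj1 HW) as hy.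
  pose proof (Xb_le_linear b x y hb HW ltac:(lra)). lra.
Qed.

Lemma dlogsum_at_one (y : R) : dlogsum y 1 = 0.
Proof.
  unfold dlogsum. rewrite (Series_ext _ (fun _ => 0 * 0)), Series_scal_l; [ring|].
  intro k. unfold dlogfac. rewrite Rmult_1_r.
  replace (2 * PI * INR (S k)) with (0 + 2 * INR (S k) * PI) by ring.
  rewrite sin_period, sin_0. unfold Rdiv. ring.
Qed.

Lemma Xb_at_one (b y : R) : Xb b 1 y = 0.
Proof. unfold Xb. replace ((1 + 1) / 2) with 1 by field. rewrite !dlogsum_at_one. field. Qed.

Lemma Xb_continuous (b y : R) : 0 < y -> continuity (fun x => Xb b x y).
Proof.
  intro hy.
  change (continuity (plus_fct (mult_real_fct b (dlogsum y))
            (mult_real_fct ((1 - b) / 2) (comp (dlogsum (y / 2)) (fun x => (x + 1) / 2))))).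
  apply continuity_plus; apply continuity_scal; [apply dlogsum_continuous, hy|].
  apply continuity_comp; [intro x; reg | apply dlogsum_continuous; lra].
Qed.

(** [limsup_{W ∋ z -> 1} X_b >= 0]: take [z = 1 - u + iy0] with [y0] small and then [u]
    small enough, by continuity of [X_b(·, y0)] at [1] where it vanishes. *)
Lemma Xb_nearly_nonneg_near_one (b : R) : forall eps delta, eps > 0 -> delta > 0 -> exists x y,
  inW x y /\ sqrt ((x - 1) ^ 2 + y ^ 2) < delta /\ Xb b x y > - eps.
Proof.
  intros eps delta heps hdelta.
  set (y0 := Rmin (delta / 4) (1 / 2)).
  assert (Hy0 : 0 < y0) by (apply Rmin_pos; lra).
  pose proof (Rmin_l (delta / 4) (1 / 2)) as Hy0d. pose proof (Rmin_r (delta / 4) (1 / 2)) as Hy0h.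
  fold y0 in Hy0d, Hy0h.
  destruct (Xb_continuous b y0 Hy0 1 eps heps) as [a [Ha Hcont]].
  set (u := Rmin (a / 2) (y0 ^ 2 / 4)).
  assert (Hu : 0 < u) by (apply Rmin_pos; nra).
  pose proof (Rmin_l (a / 2) (y0 ^ 2 / 4)) as Hua. pose proof (Rmin_r (a / 2) (y0 ^ 2 / 4)) as Huy.
  fold u in Hua, Huy.
  exists (1 - u), y0. split; [apply inW_of_small; lra|]. split.
  - apply Rle_lt_trans with (sqrt ((2 * y0) ^ 2)).
    + apply sqrt_le_1_alt. assert (y0 ^ 2 <= y0) by (simpl; nra).
      replace (1 - u - 1) with (- u) by ring. nra.
    + rewrite sqrt_pow2 by lra. lra.
  - assert (Hdist : Rabs (Xb b (1 - u) y0 - Xb b 1 y0) < eps).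
    { apply (Hcont (1 - u)). split; [split; [exact I | lra] |].
      simpl. unfold Rdist. rewrite Rabs_left; lra. }
    rewrite Xb_at_one, Rminus_0_r in Hdist. apply Rabs_def2 in Hdist. lra.
Qed.

Theorem lemma5p1 (b : R) (hb : 0 <= b <= 1) :
  (forall x y, inW x y -> exists l, derivable_pt_lim (fun t => fb b t y) x l) /\
  (forall X : R -> R -> R,
     (forall x y, inW x y -> derivable_pt_lim (fun t => fb b t y) x (X x y)) ->
     (forall eps, eps > 0 -> exists delta, delta > 0 /\
        forall x y, inW x y -> sqrt ((x - 1) ^ 2 + y ^ 2) < delta -> X x y < eps) /\
     (forall eps delta, eps > 0 -> delta > 0 -> exists x y,
        inW x y /\ sqrt ((x - 1) ^ 2 + y ^ 2) < delta /\ X x y > - eps)).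
Proof.
  split.
  - intros x y [hy _]. exists (Xb b x y). apply fb_deriv, hy.
  - intros X HX.
    assert (HXb : forall x y, inW x y -> X x y = Xb b x y).
    { intros x y HW. apply (uniqueness_limite (fun t => fb b t y) x);
        [apply HX, HW | apply fb_deriv, (proj1 HW)]. }
    split.
    + intros eps heps. destruct (Xb_small_near_one b hb eps heps) as [delta [Hdelta Hsmall]].
      exists delta. split; [exact Hdelta|].
      intros x y HW Hdist. rewrite HXb by exact HW. apply Hsmall; assumption.
    + intros eps delta heps hdelta.
      destruct (Xb_nearly_nonneg_near_one b eps delta heps hdelta) as [x [y [HW [Hdist Hpos]]]].
      exists x, y. rewrite HXb by exact HW. auto.
Qed.
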